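(* Let $d,r\ge1$ and consider a reaction network with species $S_1,\dots,S_{d+r}$ and reactions $y_k\to y'_k$ ($k=1,\dots,K$), where $y_k,y'_k\in\mathbb Z^{d+r}_{\ge 0}$ and $y_k\ne y'_k$. Put $\alpha_i=0$ for $i\le d$ and $\alpha_i=1$ for $i>d$. Fix $\kappa_k>0$, real $\beta_k$, $z^0_\ell\in\mathbb Z^d_{\ge0}$ and $z^0_h\in\mathbb R^r_{>0}$. Let $X^N$ be the continuous-time Markov chain on $\mathbb Z^{d+r}_{\ge0}$ which jumps from $x$ to $x+y'_k-y_k$ with intensity $N^{\beta_k}\kappa_k x^{(y_k)}$, started at $X^N_i(0)=N^{\alpha_i}z^0_i$, where $z^0=(z^0_\ell,z^0_h)$. Let $\theta_0=\max_k(\beta_k+y_k\cdot\alpha)$ and $\mathcal R_0=\{k:\beta_k+y_k\cdot\alpha=\theta_0\}$. Let $Z^N$ be the scaled process with $Z^N_i(t)=N^{-\alpha_i}X^N_i(N^{-\theta_0}t)$, and let $p^N(A,t)=P(Z^N(t)\in A)$. Let $\mathbb S_\ell\times\mathbb S_h$ be the state space of $Z^N$, with $\mathbb S_\ell\subseteq\mathbb Z^d_{\ge0}$ and $\mathbb S_h\subseteq\mathbb R^r_{\ge0}$. For $k\in\mathcal R_0$ and $z_h\in\mathbb R^r_{\ge0}$, put $$\lambda^N_{H,k}(z_h)=\prod_{i=1}^r z_{h,i}\Bigl(z_{h,i}-\tfrac1N\Bigr)\cdots\Bigl(z_{h,i}-\tfrac{y_{k,d+i}-1}{N}\Bigr)$$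 and $s_k=(z^0_h)^{q_H(y_k)}$. For $M>0$ define $S_M=S_{L,M}\times S_{H,M}$, where $$S_{L,M}=\{z_\ell\in\mathbb S_\ell:\|z_\ell\|_\infty\le M\},$$ $$S_{H,M}=\{z_h\in\mathbb S_h:|\lambda^N_{H,k}(z_h)-s_k|\le M/N\ \text{for all }k\in\mathcal R_0\}.$$ Let $\tau^N_m$ be the time of the $\lfloor m\rfloor$-th transition of $Z^N$. Then there exists a constant $c>0$ such that, for $M=N^\rho$ with arbitrary $\rho\in(0,1)$ and $N$ sufficiently large, $p^N(S_M^c,t)\le P(\tau^N_{cM}<t)$ for all $t$.
   Context: Notation: $n^{(k)}=n(n-1)\cdots(n-k+1)$ when $n\ge k$ and $n^{(k)}=0$ otherwise, with $x^{(y)}=\prod_i x_i^{(y_i)}$ and $u^v=\prod_i u_i^{v_i}$. The map $q_H$ keeps the last $r$ coordinates of a vector in $\mathbb Z^{d+r}$. The symbol $\lfloor m\rfloor$ denotes the floor of $m$. *)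

From HB Require Import structures.
From mathcomp Require Import all_boot all_order all_algebra.
From mathcomp Require Import all_classical all_reals all_analysis.
From mathcomp Require Import measurable_realfun.
Set Implicit Arguments. Unset Strict Implicit. Unset Printing Implicit Defensive.
Import Order.TTheory GRing.Theory Num.Theory.
Local Open Scope ring_scope.
Local Open Scope classical_set_scope.

Definition state (n : nat) := {ffun 'I_n -> nat}.

Section CRN.
Variables (R : realType) (d r K : nat).
Variables (y y' : 'I_K -> state (d + r)) (kappa beta : 'I_K -> R).

Definition ffact_vec (x yk : state (d + r)) : nat :=
  (\prod_(i < d + r) (x i) ^_ (yk i))%N.

Definition rate (N : nat) (k : 'I_K) (x : state (d + r)) : R :=
  powR (N%:R) (beta k) * kappa k * (ffact_vec x (y k))%:R.

(* state after reaction k (exact whenever rate > 0, since then y_k <= x) *)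
Definition target (k : 'I_K) (x : state (d + r)) : state (d + r) :=
  [ffun i => (x i + y' k i - y k i)%N].

Definition qtot (N : nat) (x : state (d + r)) : R := \sum_(k < K) rate N k x.

Definition qrate (N : nat) (x z : state (d + r)) : R :=
  \sum_(k < K | target k x == z) rate N k x.

Definition jump_prob (N : nat) (x z : state (d + r)) : R :=
  if qtot N x == 0 then (z == x)%:R else qrate N x z / qtot N x.

(* (J, H) is the (jump chain, holding times) description of the continuous-time
   Markov chain with the above intensities started at x0: the joint law of
   (J_0..J_n, H_0..H_{n-1}) is given on all rectangles. *)
Definition is_CTMC (N : nat) (x0 : state (d + r))
  {dsp : measure_display} {Omega : measurableType dsp}
  (P : probability Omega R)
  (J : nat -> Omega -> state (d + r)) (H : nat -> Omega -> \bar R) : Prop :=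
  (forall n x, measurable [set w : Omega | J n w = x]) /\
  (forall n, measurable_fun [set: Omega] (H n : Omega -> \bar R)) /\
  (forall (n : nat) (xs : nat -> state (d + r)) (ts : nat -> R),
     (forall i, 0 <= ts i) ->
     P [set w : Omega | (forall i, (i <= n)%N -> J i w = xs i) /\
                (forall i, (i < n)%N -> ((ts i)%:E < H i w)%E)]
     = ((xs 0%N == x0)%:R *
        \prod_(i < n) (jump_prob N (xs i) (xs i.+1) *
                       expR (- (qtot N (xs i) * ts i))))%:E).

Definition jump_time (H : nat -> \bar R) (n : nat) : \bar R :=
  (\sum_(i < n) H i)%E.

Definition lambdaH (N : nat) (k : 'I_K) (x : state (d + r)) : R :=
  \prod_(i < r) \prod_(j < y k (rshift d i))
     ((x (rshift d i))%:R / N%:R - j%:R / N%:R).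

Definition s_k (z0h : 'I_r -> R) (k : 'I_K) : R :=
  \prod_(i < r) z0h i ^+ y k (rshift d i).

Definition y_alpha (k : 'I_K) : nat := (\sum_(i < r) y k (rshift d i))%N.

(* Z^N in S_M, expressed on the unscaled state x = X^N (z_l = x_l, z_h = x_h/N) *)
Definition in_SM (N : nat) (theta0 M : R) (z0h : 'I_r -> R)
  (x : state (d + r)) : Prop :=
  (forall i : 'I_d, (x (lshift r i))%:R <= M) /\
  (forall k : 'I_K, beta k + (y_alpha k)%:R = theta0 ->
     `|lambdaH N k x - s_k z0h k| <= M / N%:R).

End CRN.

From HB Require Import structures.
From mathcomp Require Import all_boot all_order all_algebra.
From mathcomp Require Import all_classical all_reals all_analysis.
From mathcomp Require Import measurable_realfun.
From mathcomp Require Import zify ring lra.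
Set Implicit Arguments. Unset Strict Implicit. Unset Printing Implicit Defensive.
Import Order.TTheory GRing.Theory Num.Theory.

(* Let Y be the largest stoichiometric coefficient. After at most n jumps every
   coordinate of X^N lies within n Y of its initial value. For n <= c M this keeps
   the low coordinates below M, and it moves each of the at most r Y factors
   x_{h,i}/N - j/N of lambda^N_{H,k} by at most (n Y + Y)/N away from z0_{h,i}, so
   that |lambda^N_{H,k} - s_k| <= M/N once c is small and N is large. Hence
   Z^N(t) outside S_M forces more than c M jumps before t, and since holding times
   are almost surely positive, the floor(c M)-th jump happens strictly before t.
   The almost-sure facts come from the jump-chain law: the paths that the chain
   can follow in n steps have total probability 1. *)

Definition state_dist_le n (D : nat) (x x' : state n) : Prop :=
  forall j, (x' j <= x j + D /\ x j <= x' j + D)%N.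

Lemma state_dist_le_trans n (D D' : nat) (x x' x'' : state n) :
  state_dist_le D x x' -> state_dist_le D' x' x'' -> state_dist_le (D + D') x x''.
Proof. by move=> h h' j; have := h j; have := h' j; lia. Qed.

Section Trajectories.
Variables (d r K : nat) (y y' : 'I_K -> state (d + r)).
Local Notation st := (state (d + r)).

(* A state is its own successor: the jump chain stays put at absorbing states. *)
Definition successors (x : st) : seq st :=
  undup (x :: [seq target y y' k x | k <- enum 'I_K]).

Lemma target_successors k x : target y y' k x \in successors x.
Proof. by rewrite mem_undup inE (map_f (fun k => target y y' k x)) ?orbT ?mem_enum. Qed.

Fixpoint paths (x0 : st) (n : nat) : seq (seq st) :=
  if n is n'.+1 then [seq rcons p z | p <- paths x0 n', z <- successors (last x0 p)]
  else [:: [:: x0]].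

Lemma size_paths x0 n p : p \in paths x0 n -> size p = n.+1.
Proof.
elim: n p => [|n IH] p /=; first by rewrite inE => /eqP ->.
by case/allpairsPdep => q [z [Hq _ ->]]; rewrite size_rcons (IH _ Hq).
Qed.

Lemma uniq_paths x0 n : uniq (paths x0 n).
Proof.
elim: n => [|n IH] //=; apply: allpairs_uniq_dep => // [q _|]; first exact: undup_uniq.
by move=> [q1 z1] [q2 z2] _ _ /= /rcons_inj [-> ->].
Qed.

Lemma nth0_paths x0 n p : p \in paths x0 n -> nth x0 p 0 = x0.
Proof.
elim: n p => [|n IH] p /=; first by rewrite inE => /eqP ->.
case/allpairsPdep => q [z [Hq _ ->]]; rewrite nth_rcons (size_paths Hq).
exact: IH.
Qed.

Definition max_stoich : nat := (\max_(k < K) \max_(j < d + r) (y k j + y' k j))%N.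

Lemma stoich_le_max k j : (y k j <= max_stoich /\ y' k j <= max_stoich)%N.
Proof.
have : (y k j + y' k j <= max_stoich)%N.
  by apply: leq_trans (leq_bigmax k); exact: (leq_bigmax j).
lia.
Qed.

Lemma successors_dist_le x z : z \in successors x -> state_dist_le max_stoich x z.
Proof.
rewrite mem_undup inE => /predU1P [-> j|/mapP [k _ -> j]]; first lia.
by rewrite /target ffunE; have := stoich_le_max k j; lia.
Qed.

Lemma paths_dist_le x0 n p : p \in paths x0 n ->
  state_dist_le (n * max_stoich) x0 (nth x0 p n).
Proof.
elim: n p => [|n IH] p /=; first by rewrite inE => /eqP -> j /=; lia.
case/allpairsPdep => q [z [Hq Hz ->]].
rewrite nth_rcons (size_paths Hq) ltnn eqxx mulSnr.
apply: state_dist_le_trans (IH _ Hq) _.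
by rewrite -nth_last (size_paths Hq) in Hz; exact: successors_dist_le.
Qed.

Section Weights.
Variables (R : realType) (kappa beta : 'I_K -> R) (N : nat).
Local Open Scope ring_scope.
Local Notation jump_prob := (jump_prob y y' kappa beta N).

Lemma sum_jump_prob x : \sum_(z <- successors x) jump_prob x z = 1.
Proof.
have us := undup_uniq (x :: [seq target y y' k x | k <- enum 'I_K]).
rewrite /jump_prob; case: eqP => [_|/eqP q0].
  rewrite (eq_bigr (fun z => if z == x then 1 else 0)) => [|z _]; last by case: eqP.
  by rewrite -big_mkcond -big_filter filter_pred1_uniq ?big_seq1 // mem_undup mem_head.
rewrite -mulr_suml /qrate; under eq_bigr do rewrite big_mkcond.
rewrite exchange_big /= -[X in X / _ = _](@eq_bigr _ _ _ _ _ _ (rate y kappa beta N ^~ x)).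
  exact: divff.
move=> k _; under eq_bigr do rewrite eq_sym.
by rewrite -big_mkcond -big_filter filter_pred1_uniq ?big_seq1 ?target_successors.
Qed.

Definition path_weight (x0 : st) (n : nat) (p : seq st) : R :=
  \prod_(i < n) jump_prob (nth x0 p i) (nth x0 p i.+1).

Lemma path_weight_rcons x0 n p z : p \in paths x0 n ->
  path_weight x0 n.+1 (rcons p z) = path_weight x0 n p * jump_prob (last x0 p) z.
Proof.
move=> Hp; have Hs := size_paths Hp.
rewrite /path_weight big_ord_recr /= !nth_rcons Hs ltnSn ltnn eqxx -nth_last Hs.
congr (_ * _); apply: eq_bigr => i _.
by rewrite !nth_rcons Hs (ltn_trans (ltn_ord i)) // ltnS ltn_ord.
Qed.

Lemma sum_path_weight x0 n : \sum_(p <- paths x0 n) path_weight x0 n p = 1.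
Proof.
elim: n => [|n IH] /=; first by rewrite big_seq1 /path_weight big_ord0.
rewrite big_allpairs_dep /= -[RHS]IH !big_seq; apply: eq_bigr => p Hp.
under eq_bigr do rewrite path_weight_rcons //.
by rewrite -mulr_sumr sum_jump_prob mulr1.
Qed.

End Weights.
End Trajectories.

Local Open Scope ring_scope.

Section ProductPerturbation.
Variables (R : realFieldType) (I : eqType).

Lemma norm_prod_le (s : seq I) (b : I -> R) Z :
  (forall i, i \in s -> `|b i| <= Z) -> `|\prod_(i <- s) b i| <= Z ^+ size s.
Proof.
elim: s => [|a s IH] hb; first by rewrite big_nil normr1.
rewrite big_cons normrM exprS; apply: ler_pM => //; first exact/hb/mem_head.
by apply: IH => i si; apply: hb; rewrite inE si orbT.
Qed.

Lemma norm_prodB_le (s : seq I) (a b : I -> R) e Z :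
  0 <= e <= 1 -> 0 <= Z -> (forall i, i \in s -> `|a i - b i| <= e) ->
  (forall i, i \in s -> `|b i| <= Z) ->
  `|\prod_(i <- s) a i - \prod_(i <- s) b i| <= (size s)%:R * e * (Z + 1) ^+ size s.
Proof.
move=> /andP [e0 e1] Z0; elim: s => [|a0 s IH] hab hb.
  by rewrite !big_nil subrr normr0 !mul0r.
have hab' i : i \in s -> `|a i - b i| <= e by move=> si; apply: hab; rewrite inE si orbT.
have hb' i : i \in s -> `|b i| <= Z by move=> si; apply: hb; rewrite inE si orbT.
have hAB := IH hab' hb'; have hB := norm_prod_le hb'.
have h1 := hab _ (mem_head a0 s); have h2 := hb _ (mem_head a0 s).
rewrite !big_cons /=.
set A := \prod_(i <- s) a i in hAB *; set B := \prod_(i <- s) b i in hAB hB *.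
have ha0 : `|a a0| <= Z + 1.
  by have := ler_normD (b a0) (a a0 - b a0); rewrite addrC subrK; lra.
have hZ : Z ^+ size s <= (Z + 1) ^+ size s by apply: lerXn2r; rewrite ?nnegrE; lra.
set W := (Z + 1) ^+ size s in hAB hZ *.
have W0 : 0 <= Z ^+ size s by exact: exprn_ge0.
have -> : a a0 * A - b a0 * B = a a0 * (A - B) + (a a0 - b a0) * B by ring.
apply: le_trans (ler_normD _ _) _; rewrite !normrM exprS -/W mulrSr.
have u1 : `|a a0| * `|A - B| <= (Z + 1) * ((size s)%:R * e * W) by exact: ler_pM.
have u2 : `|a a0 - b a0| * `|B| <= e * W by apply: ler_pM => //; exact: le_trans hB hZ.
have u3 : e * W <= (Z + 1) * (e * W) by rewrite ler_peMl ?mulr_ge0; lra.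
lra.
Qed.

End ProductPerturbation.

Section ScaledState.
Variables (R : realType) (d r K : nat) (y y' : 'I_K -> state (d + r)).
Variables (beta : 'I_K -> R) (z0l : 'I_d -> nat) (z0h : 'I_r -> R).
Hypothesis z0h_gt0 : forall i, 0 < z0h i.
Local Notation Y := (max_stoich y y').

Definition z0l_sum : R := \sum_(i < d) (z0l i)%:R.
Definition z0h_sum : R := \sum_(i < r) z0h i.

(* [r * Y] bounds the number of factors of [lambdaH]. *)
Definition lambdaH_const : R := (r * Y)%:R * (z0h_sum + 1) ^+ (r * Y) + 1.

Lemma z0h_sum_ge0 : 0 <= z0h_sum.
Proof. by apply: sumr_ge0 => i _; exact: ltW. Qed.

Lemma lambdaH_const_ge1 : 1 <= lambdaH_const.
Proof.
rewrite lerDr mulr_ge0 // exprn_ge0 //; have := z0h_sum_ge0; lra.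
Qed.

Lemma lambdaH_dist_le N k (x0 x : state (d + r)) D :
  (0 < N)%N -> (forall i, (x0 (rshift d i))%:R = N%:R * z0h i) ->
  state_dist_le D x0 x -> (D + Y <= N)%N ->
  `|lambdaH R y N k x - s_k y z0h k| <= lambdaH_const * (D + Y)%:R / N%:R.
Proof.
move=> N0 hx0 hx DYN; have N0' : (0 : R) < N%:R by rewrite ltr0n.
pose m i := y k (rshift d i).
pose Sq := [seq (i, j) | i <- index_enum 'I_r, j <- index_iota 0 (m i)].
pose e : R := (D + Y)%:R / N%:R.
have e01 : 0 <= e <= 1.
  by rewrite divr_ge0 //= ler_pdivrMr // mul1r ler_nat.
have -> : lambdaH R y N k x = \prod_(p <- Sq) ((x (rshift d p.1))%:R / N%:R - p.2%:R / N%:R).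
  by rewrite big_allpairs_dep; apply: eq_bigr => i _; rewrite big_mkord.
have -> : s_k y z0h k = \prod_(p <- Sq) z0h p.1.
  rewrite big_allpairs_dep; apply: eq_bigr => i _.
  by rewrite [RHS](eq_bigr (fun=> z0h i)) // prodr_const_nat subn0.
have hab p : p \in Sq -> `|(x (rshift d p.1))%:R / N%:R - p.2%:R / N%:R - z0h p.1| <= e.
  case/allpairsPdep => i [j [_ + ->]] /=; rewrite mem_index_iota => /andP [_ jm].
  have jY : (j <= Y)%N by apply: ltnW; apply: leq_trans jm (stoich_le_max y y' k _).1.
  have -> : z0h i = (x0 (rshift d i))%:R / N%:R by rewrite hx0 mulrAC divff ?mul1r ?gt_eqF.
  rewrite /e -!mulrBl normrM [`|_^-1|]gtr0_norm ?invr_gt0 // ler_pM2r ?invr_gt0 //.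
  have [h1 h2] := hx (rshift d i).
  move: h1 h2 jY; rewrite -!(ler_nat R) !natrD => h1 h2 jY.
  have j0 : (0 : R) <= j%:R by [].
  by rewrite ler_norml; apply/andP; split; lra.
have hb p : p \in Sq -> `|z0h p.1| <= z0h_sum.
  move=> _; rewrite gtr0_norm //.
  by rewrite /z0h_sum (bigD1 p.1) //= lerDl sumr_ge0 // => i _; exact: ltW.
apply: le_trans (norm_prodB_le e01 z0h_sum_ge0 hab hb) _.
have sizeSq : (size Sq <= r * Y)%N.
  rewrite size_allpairs_dep sumnE big_map -[X in (_ <= X * _)%N]card_ord -sum_nat_const.
  apply: leq_sum => i _; rewrite size_iota subn0.
  exact: (stoich_le_max y y' k _).1.
have hZ : 1 <= z0h_sum + 1 by have := z0h_sum_ge0; lra.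
have hL : (size Sq)%:R * (z0h_sum + 1) ^+ size Sq <= (r * Y)%:R * (z0h_sum + 1) ^+ (r * Y).
  apply: ler_pM; rewrite ?ler_nat ?exprn_ge0 ?ler_weXn2l //; lra.
rewrite mulrAC -[X in _ <= X]mulrA -/e; apply: ler_wpM2r; first by case/andP: e01.
by rewrite /lambdaH_const; lra.
Qed.

Lemma in_SM_of_dist_le N M theta0 (x0 x : state (d + r)) D :
  (0 < N)%N -> (forall i, x0 (lshift r i) = z0l i) ->
  (forall i, (x0 (rshift d i))%:R = N%:R * z0h i) ->
  state_dist_le D x0 x -> z0l_sum + D%:R <= M ->
  lambdaH_const * (D + Y)%:R <= M -> M <= N%:R ->
  in_SM y beta N theta0 M z0h x.
Proof.
move=> N0 hx0l hx0h hx hlow hhigh MN; have L1 := lambdaH_const_ge1.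
split=> [i | k _].
  have := (hx (lshift r i)).1; rewrite hx0l -(ler_nat R) natrD => h.
  have : (z0l i)%:R <= z0l_sum by rewrite /z0l_sum (bigD1 i) //= lerDl sumr_ge0.
  lra.
apply: le_trans (lambdaH_dist_le k N0 hx0h hx _) _.
  rewrite -(ler_nat R).
  have : (D + Y)%:R <= lambdaH_const * (D + Y)%:R :> R by rewrite ler_peMl.
  lra.
by rewrite ler_pM2r ?invr_gt0 ?ltr0n.
Qed.

(* Chosen so that lambdaH_const * (n * Y) <= M / 2 whenever n <= jump_budget * M. *)
Definition jump_budget : R := (2 * lambdaH_const * Y.+1%:R)^-1.
Definition M_threshold : R := 2 * z0l_sum + 2 * lambdaH_const * Y%:R.

Lemma jump_budget_gt0 : 0 < jump_budget.
Proof. by rewrite invr_gt0 !mulr_gt0 // (lt_le_trans _ lambdaH_const_ge1). Qed.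

Lemma M_threshold_ge0 : 0 <= M_threshold.
Proof.
have := lambdaH_const_ge1; rewrite /M_threshold => L1.
by rewrite addr_ge0 ?mulr_ge0 ?sumr_ge0 //; lra.
Qed.

Lemma in_SM_of_few_jumps N M theta0 (x0 x : state (d + r)) n :
  (0 < N)%N -> (forall i, x0 (lshift r i) = z0l i) ->
  (forall i, (x0 (rshift d i))%:R = N%:R * z0h i) ->
  state_dist_le (n * Y) x0 x -> n%:R <= jump_budget * M ->
  M_threshold <= M -> M <= N%:R -> in_SM y beta N theta0 M z0h x.
Proof.
move=> N0 hx0l hx0h hx hn hM MN; have L1 := lambdaH_const_ge1.
have z0l0 : 0 <= z0l_sum by apply: sumr_ge0.
have {}hM : 2 * z0l_sum + 2 * (lambdaH_const * Y%:R) <= M by rewrite mulrA.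
have LY0 : 0 <= lambdaH_const * Y%:R by apply: mulr_ge0 => //; lra.
have LnY : lambdaH_const * (n * Y)%:R <= M / 2.
  have -> : M / 2 = lambdaH_const * (jump_budget * M * Y.+1%:R).
    by rewrite /jump_budget; field; rewrite !gt_eqF //; lra.
  by rewrite ler_pM2l ?natrM; [apply: ler_pM; rewrite ?ler_nat | lra].
have nY : (n * Y)%:R <= lambdaH_const * (n * Y)%:R :> R by rewrite ler_peMl.
apply: (in_SM_of_dist_le _ N0 hx0l hx0h hx) => //; first lra.
by rewrite natrD mulrDr; lra.
Qed.

End ScaledState.

Local Open Scope classical_set_scope.

Lemma jump_time_lt (R : realType) (h : nat -> \bar R) m n (s : R) : (m < n)%N ->
  (forall i, (i < n)%N -> (0 < h i)%E) -> (jump_time h n <= s%:E)%E ->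
  (jump_time h m < s%:E)%E.
Proof.
move=> mn h_gt0; rewrite /jump_time -!(big_mkord xpredT h).
rewrite (big_cat_nat (leq0n m) (ltnW mn)) (big_ltn mn) /= addeA.
have sum_ge0 a b : (b <= n)%N -> (0 <= \sum_(a <= i < b) h i)%E.
  move=> bn; rewrite big_seq; apply: sume_ge0 => i.
  by rewrite mem_index_iota => /andP [_ ib]; apply/ltW/h_gt0; lia.
move=> le_s; have Tm_le : (\sum_(0 <= i < m) h i + h m <= s%:E)%E.
  by apply: le_trans _ le_s; rewrite leeDl // sum_ge0.
have Tm_fin : \sum_(0 <= i < m) h i \is a fin_num.
  rewrite ge0_fin_numE ?sum_ge0 ?(ltnW mn) //; apply: le_lt_trans (ltry s).
  by apply: le_trans _ Tm_le; rewrite leeDl // ltW ?h_gt0.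
by apply: lt_le_trans Tm_le; rewrite lteDl ?h_gt0.
Qed.

Lemma measurable_fibres_preimage (dsp : measure_display) (Omega : measurableType dsp)
  (T : countType) (f : Omega -> T) (A : set T) :
  (forall x, measurable (f @^-1` [set x])) -> measurable (f @^-1` A).
Proof.
move=> mf; rewrite -[A]image_id -bigcup_imset1 preimage_bigcup bigcup_mkcond.
by apply: countable_bigcupT_measurable => [|x]; [exact: countableP | case: ifP].
Qed.

Section JumpChain.
Variables (R : realType) (d r K : nat) (y y' : 'I_K -> state (d + r)).
Variables (kappa beta : 'I_K -> R) (N : nat) (x0 : state (d + r)).
Variables (dsp : measure_display) (Omega : measurableType dsp) (P : probability Omega R).
Variables (J : nat -> Omega -> state (d + r)) (H : nat -> Omega -> \bar R).
Hypothesis chain : is_CTMC y y' kappa beta N x0 P J H.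
Local Notation paths := (paths y y' x0).

(* The rectangle of [is_CTMC] with all holding-time thresholds equal to 0. *)
Definition follows_path (n : nat) (p : seq (state (d + r))) : set Omega :=
  [set w | (forall i, (i <= n)%N -> J i w = nth x0 p i) /\
           (forall i, (i < n)%N -> (0%:E < H i w)%E)].

Lemma measurable_follows_path n p : measurable (follows_path n p).
Proof.
case: chain => mJ [mH _].
have -> : follows_path n p = (\bigcap_(i in `I_n.+1) J i @^-1` [set nth x0 p i]) `&`
    (\bigcap_(i in `I_n) [set w | (0%:E < H i w)%E]) by [].
apply: measurableI; apply: bigcap_measurableType => i _; first exact: mJ.
rewrite -[X in measurable X]setTI.
exact: measurable_lte (measurable_cst _) (mH i).
Qed.

Lemma P_follows_path n p : p \in paths n ->
  P (follows_path n p) = (path_weight y y' kappa beta N x0 n p)%:E.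
Proof.
move=> pn; case: chain => _ [_ law].
rewrite [LHS](law n (nth x0 p) (fun=> 0) (fun=> lexx 0)) (nth0_paths pn) eqxx mul1r.
by congr (_%:E); apply: eq_bigr => i _; rewrite mulr0 oppr0 expR0 mulr1.
Qed.

Lemma measurable_some_path_followed n :
  measurable (\bigcup_(p in [set` paths n]) follows_path n p).
Proof.
by rewrite bigcup_seq; apply: bigsetU_measurable => p _; exact: measurable_follows_path.
Qed.

Lemma P_some_path_followed n :
  P (\bigcup_(p in [set` paths n]) follows_path n p) = 1%E.
Proof.
have trivI : trivIset [set` paths n] (follows_path n).
  move=> p q /= pn qn [w [[Jp _] [Jq _]]].
  apply: (@eq_from_nth _ x0) => [|i]; first by rewrite (size_paths pn) (size_paths qn).
  by rewrite (size_paths pn) ltnS => ilen; rewrite -Jp // -Jq.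
rewrite -fsbig_setU ?measure_fsbig; last exact: finite_seq.
- rewrite -fsbig_seq ?uniq_paths //.
  rewrite (eq_big_seq (fun p => (path_weight y y' kappa beta N x0 n p)%:E)).
    by rewrite sumEFin sum_path_weight.
  by move=> p pn; exact: P_follows_path.
- exact: finite_seq.
- by move=> p _; exact: measurable_follows_path.
- exact: trivI.
Qed.

Lemma ae_paths_followed :
  P.-negligible (\bigcup_n ~` \bigcup_(p in [set` paths n]) follows_path n p).
Proof.
apply: negligible_bigcup => n.
apply/negligibleP; first exact/measurableC/measurable_some_path_followed.
have := probability_setC P (measurable_some_path_followed n).
by rewrite P_some_path_followed subee.
Qed.

Lemma measurable_jump_time n : measurable_fun setT (fun w => jump_time (H ^~ w) n).
Proof. by apply: emeasurable_sum => i; case: chain => _ []. Qed.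

Definition state_at (S : set (state (d + r))) (s : R) : set Omega :=
  [set w | exists n, (jump_time (H ^~ w) n <= s%:E)%E /\
     (s%:E < jump_time (H ^~ w) n.+1)%E /\ S (J n w)].

Lemma measurable_state_at S s : measurable (state_at S s).
Proof.
have -> : state_at S s = \bigcup_n ([set w | (jump_time (H ^~ w) n <= s%:E)%E] `&`
    [set w | (s%:E < jump_time (H ^~ w) n.+1)%E] `&` J n @^-1` S).
  by apply/seteqP; split => [w [n [? [? ?]]]|w [n _ [[? ?] ?]]]; exists n.
apply: bigcupT_measurable => n; apply: measurableI; first apply: measurableI.
- rewrite -[X in measurable X]setTI.
  exact: measurable_lee (measurable_jump_time n) (measurable_cst _).
- rewrite -[X in measurable X]setTI.
  exact: measurable_lte (measurable_cst _) (measurable_jump_time n.+1).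
- by apply: measurable_fibres_preimage => x; case: chain => mJ _; exact: mJ.
Qed.

Lemma P_state_at_le_jump_time (S : set (state (d + r))) (s : R) (m : nat) :
  (forall n p, (n <= m)%N -> p \in paths n -> ~ S (nth x0 p n)) ->
  (P (state_at S s) <= P [set w | (jump_time (H ^~ w) m < s%:E)%E])%E.
Proof.
move=> unreachable; have [Nul [mNul PNul subNul]] := ae_paths_followed.
have mTm : measurable [set w | (jump_time (H ^~ w) m < s%:E)%E].
  rewrite -[X in measurable X]setTI.
  exact: measurable_lte (measurable_jump_time m) (measurable_cst _).
rewrite -(measureU0 mTm mNul PNul).
apply: le_measure; rewrite ?inE; [exact: measurable_state_at | exact: measurableU |].
move=> w [n [Tn [_ Sw]]]; have [Nul_w|notNul] := pselect (Nul w); first by right.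
have [p pn [Jp Hp]] : (\bigcup_(p in [set` paths n]) follows_path n p) w.
  by apply: contrapT => nf; apply/notNul/subNul; exists n.
left; apply: jump_time_lt Hp Tn; rewrite ltnNge; apply/negP => nm.
by apply: (unreachable n p nm pn); rewrite -Jp.
Qed.

End JumpChain.

Lemma powR_between_eventually (R : realType) (A rho : R) : 0 <= A -> 0 < rho < 1 ->
  exists N0 : nat, forall N : nat, (N0 <= N)%N ->
    [/\ (0 < N)%N, A <= N%:R `^ rho & N%:R `^ rho <= N%:R].
Proof.
move=> A0 /andP [rho0 rho1]; exists (Num.truncn (A `^ rho^-1)).+1 => N hN.
have NA : A `^ rho^-1 < N%:R by rewrite -truncn_lt_nat ?powR_ge0.
have N_gt0 : (0 < N)%N by rewrite -(ltr0n R); apply: le_lt_trans NA; exact: powR_ge0.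
split => //.
  have -> : A = (A `^ rho^-1) `^ rho by rewrite -powRrM mulVf ?gt_eqF ?powRr1.
  by apply: ge0_ler_powR; rewrite ?nnegrE ?powR_ge0 // ltW.
rewrite -[leRHS](@powRr1 _ N%:R) //.
by apply: ler_powR; [rewrite ler1n | exact: ltW].
Qed.

Unset Implicit Arguments.
Theorem lemma3p3 (R : realType) (d r K : nat)
  (y y' : 'I_K -> state (d + r)) (kappa beta : 'I_K -> R)
  (z0l : 'I_d -> nat) (z0h : 'I_r -> R) (theta0 : R) :
  (1 <= d)%N -> (1 <= r)%N ->
  (forall k, y k != y' k) ->
  (forall k, 0 < kappa k) ->
  (forall i, 0 < z0h i) ->
  (* theta0 = max_k (beta_k + y_k . alpha) *)
  (exists k, beta k + (y_alpha y k)%:R = theta0) ->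
  (forall k, beta k + (y_alpha y k)%:R <= theta0) ->
  exists c : R, 0 < c /\
  forall rho : R, 0 < rho < 1 ->
  exists N0 : nat, forall N : nat, (N0 <= N)%N ->
  let M := powR (N%:R) rho in
  forall (x0 : state (d + r)),
    (forall i : 'I_d, x0 (lshift r i) = z0l i) ->
    (forall i : 'I_r, (x0 (rshift d i))%:R = N%:R * z0h i) ->
  forall (dsp : measure_display) (Omega : measurableType dsp)
         (P : probability Omega R)
         (J : nat -> Omega -> state (d + r)) (H : nat -> Omega -> \bar R),
    is_CTMC y y' kappa beta N x0 P J H ->
  forall t : R,
    let s := powR (N%:R) (- theta0) * t in
    (* p^N(S_M^c, t) *)
    (P [set w : Omega | exists n : nat,
          (jump_time (H ^~ w) n <= s%:E)%E /\ (s%:E < jump_time (H ^~ w) n.+1)%E /\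
          ~ in_SM y beta N theta0 M z0h (J n w)]
     <=
    (* P(tau^N_{cM} < t) : the floor(cM)-th jump of Z^N happens before t *)
     P [set w : Omega | (jump_time (H ^~ w) (Num.truncn (c * M)) < s%:E)%E])%E.
Proof.
move=> _ _ _ _ z0h_gt0 _ _.
have c_gt0 := jump_budget_gt0 y y' z0h_gt0.
exists (jump_budget y y' z0h); split => // rho rho01.
have [N0 hN0] := powR_between_eventually (M_threshold_ge0 y y' z0l z0h_gt0) rho01.
exists N0 => N /hN0 [N_gt0 thM MN] M x0 hx0l hx0h dsp Omega P J H chain t /=.
apply: (P_state_at_le_jump_time (S := fun x => ~ in_SM y beta N theta0 M z0h x) chain).
move=> n p nm pn; apply.
apply: (in_SM_of_few_jumps beta z0h_gt0 theta0 N_gt0 hx0l hx0h (paths_dist_le pn)) => //.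
have M_ge0 := le_trans (M_threshold_ge0 y y' z0l z0h_gt0) thM.
by rewrite -truncn_ge_nat //; exact: mulr_ge0 (ltW c_gt0) M_ge0.
Qed.
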